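(* Let $\mathbb{C}[X]^*$ be the linear dual of $\mathbb{C}[X]$ with the convolution product $(f*g)(X^n)=\sum_{k=0}^n\binom{n}{k}f(X^k)g(X^{n-k})$, let $I=\{f\in\mathbb{C}[X]^*\mid f(1)=0\}$, let $\mathbb{C}[X]^{\circ}$ be the subalgebra of those $f\in\mathbb{C}[X]^*$ vanishing on some non-zero ideal of $\mathbb{C}[X]$ (the linearly recursive sequences), and $J=I\cap\mathbb{C}[X]^{\circ}$. Let $\widehat{\iota}:\varprojlim_n\mathbb{C}[X]^\circ/J^n\to\varprojlim_n\mathbb{C}[X]^*/I^n\cong\mathbb{C}[X]^*$ be the map induced by the inclusion. Then $\widehat{\iota}$ is a split surjection which is not injective; consequently the $J$-adic topology on $\mathbb{C}[X]^\circ$ is strictly finer than (and not equivalent to) the topology induced from the $I$-adic topology on $\mathbb{C}[X]^*$. Explicitly, with $\xi(X^n)=\delta_{n,1}$ and $\phi_1(X^n)=1$ for all $n$, the element $\big(\phi_1-\sum_{k=0}^n\frac{1}{k!}\xi^k+J^{n+1}\big)_{n\geq0}$ is a non-zero element of the kernel of $\widehat{\iota}$.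
   Context: Under $f\mapsto\sum_{k\geq0}f(X^k/k!)Z^k$, $\mathbb{C}[X]^*\cong\mathbb{C}[[Z]]$ as algebras and $I^n$ corresponds to $\langle Z^n\rangle$; the $I$-adic topology corresponds to the Krull topology. Powers $\xi^k$ are taken in the convolution product with $\xi^0$ the unit $\varepsilon$, $\varepsilon(X^n)=\delta_{n,0}$. *)

From mathcomp Require Import all_boot all_algebra.
From mathcomp Require Import complex Rstruct.
Set Implicit Arguments. Unset Strict Implicit. Unset Printing Implicit Defensive.
Import GRing.Theory Num.Theory.
Local Open Scope ring_scope.

Definition CC : numClosedFieldType := (Rdefinitions.R)[i].

(* Linear dual of C[X]: a functional f is determined by the values f(X^n). *)
Definition dual := nat -> CC.

Definition dual_eval (f : dual) (p : {poly CC}) : CC :=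
  \sum_(i < size p) p`_i * f i.

Definition dzero : dual := fun _ => 0.
Definition dadd (f g : dual) : dual := fun n => f n + g n.
Definition dopp (f : dual) : dual := fun n => - f n.
Definition dsub (f g : dual) : dual := fun n => f n - g n.
Definition dscale (c : CC) (f : dual) : dual := fun n => c * f n.

Definition conv (f g : dual) : dual :=
  fun n => \sum_(k < n.+1) 'C(n, k)%:R * f k * g (n - k)%N.

Definition eps : dual := fun n => (n == 0)%:R.

Fixpoint cpow (f : dual) (k : nat) : dual :=
  match k with 0 => eps | k'.+1 => conv (cpow f k') f end.

Definition poly_ideal (P : {poly CC} -> Prop) : Prop :=
  P 0 /\ (forall p q, P p -> P q -> P (p + q)) /\ (forall p q, P p -> P (q * p)).

Definition Co (f : dual) : Prop :=
  exists P : {poly CC} -> Prop, poly_ideal P /\ (exists p, P p /\ p != 0) /\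
    forall p, P p -> dual_eval f p = 0.

Definition Iid (f : dual) : Prop := f 0%N = 0.
Definition Jid (f : dual) : Prop := Iid f /\ Co f.
Definition Call (f : dual) : Prop := True.

(* n-th power of an ideal Id inside the subring Rg (of the convolution algebra):
   Id^0 = Rg, Id^(n+1) = additive closure of the products a * b, a in Id^n, b in Id. *)
Inductive idpow (Rg Id : dual -> Prop) : nat -> dual -> Prop :=
| idpow_ring f : Rg f -> idpow Rg Id 0 f
| idpow_zero n : idpow Rg Id n dzero
| idpow_add n f g : idpow Rg Id n f -> idpow Rg Id n g -> idpow Rg Id n (dadd f g)
| idpow_mul n f g : idpow Rg Id n f -> Id g -> idpow Rg Id n.+1 (conv f g).

Definition Ipow := idpow Call Iid.
Definition Jpow := idpow Co Jid.

(* Elements of the inverse limits, represented by compatible sequences of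
   representatives: x_n is the representative of the component in A/Id^n. *)
Definition limJ (a : nat -> dual) : Prop :=
  (forall n, Co (a n)) /\ (forall n, Jpow n (dsub (a n.+1) (a n))).
Definition eqJ (a b : nat -> dual) : Prop := forall n, Jpow n (dsub (a n) (b n)).
Definition limI (b : nat -> dual) : Prop := forall n, Ipow n (dsub (b n.+1) (b n)).
Definition eqI (a b : nat -> dual) : Prop := forall n, Ipow n (dsub (a n) (b n)).

(* The map iota-hat induced by the inclusion C[X]^o -> C[X]^*: on
   representatives it is the identity (x_n mod J^n  |->  x_n mod I^n). *)
Definition iota_hat (a : nat -> dual) : nat -> dual := a.

Definition sadd (a b : nat -> dual) : nat -> dual := fun n => dadd (a n) (b n).
Definition smul (a b : nat -> dual) : nat -> dual := fun n => conv (a n) (b n).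
Definition sscale (c : CC) (a : nat -> dual) : nat -> dual := fun n => dscale c (a n).
Definition sone : nat -> dual := fun _ => eps.
Definition szero : nat -> dual := fun _ => dzero.

Definition xi : dual := fun n => (n == 1%N)%:R.
Definition phi1 : dual := fun _ => 1.

(* The kernel element: the component in C[X]^o/J^(n+1) is
   phi_1 - sum_(k<=n) xi^k / k!; we index by the exponent m = n+1 of J^m,
   so  kerel m = phi_1 - sum_(k<m) xi^k/k!  (kerel 0 lies in C^o/J^0 = 0). *)
Definition kerel : nat -> dual :=
  fun m => dsub phi1 (fun i => \sum_(k < m) (k`!%:R)^-1 * cpow xi k i).

(* Under f |-> sum_n f(X^n) Z^n/n!, convolution becomes the product of power series and
   the linearly recursive sequences become the exponential polynomials sum c Z^m e^(aZ)
   (factor an annihilating polynomial into linear factors).  On C^o, sending Z to 0 and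
   e^(aZ) to 1 + a t defines an algebra map to C[t]/(t^2).  Its t-coefficient is well
   defined on C^o because it is f |-> f(T) for a Chinese-remainder polynomial T = a
   mod (X - a)^M, and it is a derivation at eps, so it vanishes on J^2.  It takes the
   value 1 on phi_1 - sum_(k<n) xi^k/k!, which lies in I^n for every n: this element of
   the kernel of iota-hat is non-zero, and I^m meets C^o inside J^2 for no m.  In the other
   direction, a finitely supported sequence vanishing in degrees < n lies in J^n because
   f = (f/X) xi, so truncating b_n below degree n is an algebra section of iota-hat. *)

From mathcomp Require Import all_boot all_algebra.
From mathcomp Require Import complex Rstruct ring zify.
From Stdlib Require Import FunctionalExtensionality.
Set Implicit Arguments. Unset Strict Implicit. Unset Printing Implicit Defensive.
Import GRing.Theory Num.Theory.
Local Open Scope ring_scope.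

Definition dshift (f : dual) : dual := fun n => f n.+1.

Lemma conv_at0 f g : conv f g 0 = f 0%N * g 0%N.
Proof. by rewrite /conv big_ord1 bin0 mul1r subn0. Qed.

Lemma conv_shift f g n : conv f g n.+1 = conv (dshift f) g n + conv f (dshift g) n.
Proof.
rewrite /conv /dshift big_ord_recl [X in _ = _ + X]big_ord_recl.
have drop_last : \sum_(i < n.+1) 'C(n, i.+1)%:R * f i.+1 * g (n - i)%N =
                 \sum_(i < n) 'C(n, i.+1)%:R * f i.+1 * g (n - i)%N.
  by rewrite big_ord_recr /= bin_small // !mul0r addr0.
have pascal : \sum_(i < n.+1) 'C(n.+1, bump 0 i)%:R * f (bump 0 i) * g (n.+1 - bump 0 i)%N =
   \sum_(i < n.+1) 'C(n, i)%:R * f i.+1 * g (n - i)%N +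
   \sum_(i < n.+1) 'C(n, i.+1)%:R * f i.+1 * g (n - i)%N.
  by rewrite -big_split; apply: eq_bigr => i _; rewrite /bump /= add1n subSS binS natrD; ring.
rewrite pascal drop_last !bin0 !subn0 addrA [_ + \sum_(i < n.+1) _]addrC -!addrA.
congr (_ + (_ + _)); apply: eq_bigr => i _.
by rewrite /bump /= subnSK.
Qed.

Lemma conv_combl (f1 f2 g : dual) x y n :
  conv (fun j => x * f1 j + y * f2 j) g n = x * conv f1 g n + y * conv f2 g n.
Proof. by rewrite /conv !mulr_sumr -big_split; apply: eq_bigr => i _ /=; ring. Qed.

Lemma conv_combr (f g1 g2 : dual) x y n :
  conv f (fun j => x * g1 j + y * g2 j) n = x * conv f g1 n + y * conv f g2 n.
Proof. by rewrite /conv !mulr_sumr -big_split; apply: eq_bigr => i _ /=; ring. Qed.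

Lemma conv_sum (T U : Type) (s : seq T) (r : seq U) x y F G n :
  conv (fun k => \sum_(t <- s) x t * F t k) (fun k => \sum_(u <- r) y u * G u k) n =
  \sum_(t <- s) \sum_(u <- r) x t * y u * conv (F t) (G u) n.
Proof.
rewrite /conv.
under eq_bigr => k _ do rewrite -mulrA big_distrlr mulr_sumr.
under eq_bigr => k _ do under eq_bigr => t _ do rewrite mulr_sumr.
rewrite exchange_big; apply: eq_bigr => t _; rewrite exchange_big.
by apply: eq_bigr => u _; rewrite mulr_sumr; apply: eq_bigr => k _ /=; ring.
Qed.

Lemma conv_local f f' g g' k :
  (forall j, (j <= k)%N -> f j = f' j /\ g j = g' j) -> conv f g k = conv f' g' k.
Proof.
move=> eq_fg; apply: eq_bigr => i _.
have [-> _] := eq_fg i (leq_ord i).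
by have [_ ->] := eq_fg (k - i)%N (leq_subr _ _).
Qed.

Lemma conv_finsupp N f g k :
  (forall j, (N <= j)%N -> f j = 0) -> (forall j, (N <= j)%N -> g j = 0) ->
  (N + N <= k)%N -> conv f g k = 0.
Proof.
move=> f0 g0 Nk; apply: big1 => i _.
have [Ni|iN] := leqP N i; first by rewrite f0 // mulr0 mul0r.
by rewrite g0 ?mulr0 //; lia.
Qed.

(* [expm a m] is p |-> p^(m)(a); in C[[Z]] it is Z^m e^(aZ). *)
Definition expm (a : CC) (m : nat) : dual := fun n => ('C(n, m) * m`!)%:R * a ^+ (n - m).

Lemma expm_at0 a m : expm a m 0 = (m == 0)%:R.
Proof. by case: m => [|m]; rewrite /expm ?bin0 ?fact0 ?expr0 ?mulr1 // bin_small. Qed.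

Lemma expm_pow a n : expm a 0 n = a ^+ n.
Proof. by rewrite /expm bin0 fact0 subn0 mul1r. Qed.

Lemma expm_zero_base m n : expm 0 m n = (n == m)%:R * m`!%:R.
Proof.
rewrite /expm; case: (ltngtP n m) => [nm|mn|nm].
- by rewrite bin_small // !mul0r.
- by rewrite expr0n subn_eq0 leqNgt mn !mulr0 mul0r.
- by rewrite nm binn subnn expr0 mulr1 mul1n mul1r.
Qed.

Lemma expmS a m n : expm a m n.+1 = a * expm a m n + m%:R * expm a m.-1 n.
Proof.
case: m => [|m]; rewrite /expm.
  by rewrite !bin0 fact0 !subn0 mul0r addr0 exprS; ring.
rewrite subSS binS factS /= natrM natrD !natrM.
have [nm|mn] := leqP n m; first by rewrite (@bin_small n m.+1) ?ltnS //; ring.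
by rewrite -(subnSK mn) exprS; ring.
Qed.

Lemma dshift_expm a m : dshift (expm a m) = fun n => a * expm a m n + m%:R * expm a m.-1 n.
Proof. by apply: functional_extensionality => n; rewrite /dshift expmS. Qed.

Lemma conv_expm a m c k n : conv (expm a m) (expm c k) n = expm (a + c) (m + k) n.
Proof.
elim: n m k => [|n IHn] m k.
  by rewrite conv_at0 !expm_at0 addn_eq0 -mulnb natrM.
rewrite conv_shift expmS !dshift_expm conv_combl conv_combr !IHn.
have -> : m%:R * expm (a + c) (m.-1 + k) n = m%:R * expm (a + c) (m + k).-1 n.
  by case: m => [|m]; rewrite ?mul0r // addSn.
have -> : k%:R * expm (a + c) (m + k.-1) n = k%:R * expm (a + c) (m + k).-1 n.
  by case: k => [|k]; rewrite ?mul0r // addnS.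
by rewrite natrD; ring.
Qed.

Lemma dual_eval_widen f (p : {poly CC}) N :
  (size p <= N)%N -> dual_eval f p = \sum_(i < N) p`_i * f i.
Proof.
move=> pN; rewrite /dual_eval (big_ord_widen N (fun i => p`_i * f i) pN) big_mkcond.
apply: eq_bigr => i _; case: ifP => // /negbT; rewrite -leqNgt => pi.
by rewrite nth_default // mul0r.
Qed.

Lemma dual_eval_lin f c (p q : {poly CC}) :
  dual_eval f (c *: p + q) = c * dual_eval f p + dual_eval f q.
Proof.
pose N := maxn (size p) (size q).
have pN : (size p <= N)%N by rewrite leq_maxl.
have qN : (size q <= N)%N by rewrite leq_maxr.
have cpqN : (size (c *: p + q)%R <= N)%N.
  by rewrite (leq_trans (size_polyD _ _)) // geq_max (leq_trans (size_scale_leq _ _)).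
rewrite (dual_eval_widen _ cpqN) (dual_eval_widen _ pN) (dual_eval_widen _ qN).
by rewrite mulr_sumr -big_split; apply: eq_bigr => i _; rewrite coefD coefZ mulrDl mulrA.
Qed.

Lemma dual_eval0 f : dual_eval f 0 = 0.
Proof. by rewrite /dual_eval size_poly0 big_ord0. Qed.

Lemma dual_evalD f (p q : {poly CC}) : dual_eval f (p + q) = dual_eval f p + dual_eval f q.
Proof. by rewrite -[p]scale1r dual_eval_lin mul1r scale1r. Qed.

Lemma dual_evalZ f c (p : {poly CC}) : dual_eval f (c *: p) = c * dual_eval f p.
Proof. by rewrite -[c *: p]addr0 dual_eval_lin dual_eval0 addr0. Qed.

Lemma dual_evalN f (p : {poly CC}) : dual_eval f (- p) = - dual_eval f p.
Proof. by rewrite -scaleN1r dual_evalZ mulN1r. Qed.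

Lemma dual_eval_mulX f (p : {poly CC}) : dual_eval f (p * 'X) = dual_eval (dshift f) p.
Proof.
have pXs : (size (p * 'X)%R <= (size p).+1)%N.
  by rewrite (leq_trans (size_polyMleq _ _)) // size_polyX addn2.
rewrite (dual_eval_widen _ pXs) big_ord_recl coefMX mul0r add0r.
by apply: eq_bigr => i _; rewrite coefMX.
Qed.

Lemma dual_eval1 f : dual_eval f 1 = f 0%N.
Proof. by rewrite /dual_eval size_poly1 big_ord1 coef1 mul1r. Qed.

Lemma dual_evalC f c : dual_eval f c%:P = c * f 0%N.
Proof. by rewrite -[c%:P]mulr1 mul_polyC dual_evalZ dual_eval1. Qed.

Lemma dual_evalXn f j : dual_eval f 'X^j = f j.
Proof.
elim: j f => [|j IHj] f; first by rewrite expr0 dual_eval1.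
by rewrite exprSr dual_eval_mulX IHj.
Qed.

Lemma dual_eval_dzero (p : {poly CC}) : dual_eval dzero p = 0.
Proof. by rewrite /dual_eval big1 // => i _; rewrite mulr0. Qed.

Definition act (p : {poly CC}) (f : dual) : dual := fun j => dual_eval f ('X^j * p).

Lemma act_shift p f : act p (dshift f) = dshift (act p f).
Proof.
apply: functional_extensionality => j.
by rewrite /act /dshift -dual_eval_mulX exprS; congr dual_eval; rewrite mulrC mulrA.
Qed.

Lemma dual_eval_mul f (q p : {poly CC}) : dual_eval f (q * p) = dual_eval (act p f) q.
Proof.
elim/poly_ind: q f => [|q c IHq] f; first by rewrite mul0r !dual_eval0.
rewrite mulrDl !dual_evalD mulrAC !dual_eval_mulX IHq act_shift.
by rewrite mul_polyC dual_evalZ dual_evalC /act expr0 mul1r.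
Qed.

Lemma act_mul p q f : act (p * q) f = act p (act q f).
Proof. by apply: functional_extensionality => j; rewrite /act mulrA dual_eval_mul. Qed.

Lemma act1 f : act 1 f = f.
Proof. by apply: functional_extensionality => j; rewrite /act mulr1 dual_evalXn. Qed.

Lemma act_lin c p q f : act (c *: p + q) f = fun n => c * act p f n + act q f n.
Proof. by apply: functional_extensionality => j; rewrite /act mulrDr -scalerAr dual_eval_lin. Qed.

Lemma act_XsubC z f : act ('X - z%:P) f = fun n => f n.+1 - z * f n.
Proof.
apply: functional_extensionality => j.
by rewrite /act mulrBr -exprSr dual_evalD dual_evalN mulrC mul_polyC dual_evalZ !dual_evalXn.
Qed.

Lemma dual_eval_sum (T : Type) (s : seq T) x F p :
  dual_eval (fun n => \sum_(t <- s) x t * F t n) p = \sum_(t <- s) x t * dual_eval (F t) p.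
Proof.
rewrite /dual_eval; under eq_bigr do rewrite mulr_sumr.
rewrite exchange_big; apply: eq_bigr => t _; rewrite mulr_sumr.
by apply: eq_bigr => i _ /=; ring.
Qed.

Lemma act_sum (T : Type) p (s : seq T) x F :
  act p (fun n => \sum_(t <- s) x t * F t n) = fun n => \sum_(t <- s) x t * act p (F t) n.
Proof. by apply: functional_extensionality => j; rewrite /act dual_eval_sum. Qed.

Lemma actZ p c f : act p (fun n => c * f n) = fun n => c * act p f n.
Proof.
apply: functional_extensionality => j; rewrite /act /dual_eval mulr_sumr.
by apply: eq_bigr => i _; ring.
Qed.

Lemma act_dzero p : act p dzero = dzero.
Proof. by apply: functional_extensionality => j; rewrite /act dual_eval_dzero. Qed.

Lemma CoP f : Co f <-> exists2 p : {poly CC}, p != 0 & act p f = dzero.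
Proof.
split.
- move=> [P [[_ [_ PM]] [[p [Pp p0]] Pf]]]; exists p => //.
  by apply: functional_extensionality => j; apply: Pf; apply: PM.
- move=> [p p0 pf]; exists (fun q => exists r, q = r * p); split; [|split].
  + split; first by exists 0; rewrite mul0r.
    split; first by move=> _ _ [r1 ->] [r2 ->]; exists (r1 + r2); rewrite mulrDl.
    by move=> _ q [r ->]; exists (q * r); rewrite mulrA.
  + by exists p; split => //; exists 1; rewrite mul1r.
  + by move=> _ [r ->]; rewrite dual_eval_mul pf dual_eval_dzero.
Qed.

Lemma Co_finsupp N f : (forall k, (N <= k)%N -> f k = 0) -> Co f.
Proof.
move=> fN; apply/CoP; exists 'X^N; first by rewrite monic_neq0 // monicXn.
by apply: functional_extensionality => j; rewrite /act -exprD dual_evalXn fN // leq_addl.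
Qed.

Lemma act_XsubC_expm z a m :
  act ('X - z%:P) (expm a m) = fun n => (a - z) * expm a m n + m%:R * expm a m.-1 n.
Proof. by rewrite act_XsubC; apply: functional_extensionality => n; rewrite expmS; ring. Qed.

Lemma act_expm_root a m : act (('X - a%:P) ^+ m.+1) (expm a m) = dzero.
Proof.
elim: m => [|m IHm].
  by rewrite expr1 act_XsubC_expm; apply: functional_extensionality => n; rewrite /dzero; ring.
rewrite exprSr act_mul act_XsubC_expm subrr.
have -> : (fun n => 0 * expm a m.+1 n + m.+1%:R * expm a m.+1.-1 n) =
          (fun n => m.+1%:R * expm a m n).
  by apply: functional_extensionality => n; rewrite mul0r add0r.
by rewrite actZ IHm; apply: functional_extensionality => n; rewrite /dzero mulr0.
Qed.

Lemma act_XsubC_eq0 z h : act ('X - z%:P) h = dzero -> h = fun n => h 0%N * z ^+ n.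
Proof.
rewrite act_XsubC => hz; apply: functional_extensionality; elim=> [|n IHn].
  by rewrite expr0 mulr1.
have /eqP := congr1 (fun g => g n) hz; rewrite subr_eq0 /= => /eqP ->.
by rewrite {1}IHn exprS; ring.
Qed.

(* A term (c, a, m) stands for c Z^m e^(aZ). *)
Notation term := (CC * CC * nat)%type.

Definition expp (L : seq term) : dual := fun n => \sum_(t <- L) t.1.1 * expm t.1.2 t.2 n.

(* The t-coefficient of the image of L under the algebra map to C[t]/(t^2) sending
   Z to 0 and e^(aZ) to 1 + a t. *)
Definition tangent (L : seq term) : CC := \sum_(t <- L) (t.2 == 0)%:R * t.1.1 * t.1.2.

Definition scale_terms (k : CC) (L : seq term) : seq term :=
  [seq (k * t.1.1, t.1.2, t.2) | t <- L].

Definition mul_terms (L1 L2 : seq term) : seq term :=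
  [seq (t.1.1 * u.1.1, t.1.2 + u.1.2, (t.2 + u.2)%N) | t <- L1, u <- L2].

Lemma expp_nil : expp [::] = dzero.
Proof. by apply: functional_extensionality => n; rewrite /expp big_nil. Qed.

Lemma expp_cons t L n : expp (t :: L) n = t.1.1 * expm t.1.2 t.2 n + expp L n.
Proof. by rewrite /expp big_cons. Qed.

Lemma expp_cat L1 L2 n : expp (L1 ++ L2) n = expp L1 n + expp L2 n.
Proof. by rewrite /expp big_cat. Qed.

Lemma expp_scale k L n : expp (scale_terms k L) n = k * expp L n.
Proof. by rewrite /expp big_map mulr_sumr; apply: eq_bigr => t _; rewrite mulrA. Qed.

Lemma expp_at0 L : expp L 0%N = \sum_(t <- L) (t.2 == 0)%:R * t.1.1.
Proof. by apply: eq_bigr => t _; rewrite expm_at0 mulrC. Qed.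

Lemma expp_mul L1 L2 : expp (mul_terms L1 L2) = conv (expp L1) (expp L2).
Proof.
apply: functional_extensionality => n; rewrite /expp conv_sum big_allpairs_dep.
by apply: eq_bigr => t _; apply: eq_bigr => u _; rewrite conv_expm.
Qed.

Lemma tangent_cat L1 L2 : tangent (L1 ++ L2) = tangent L1 + tangent L2.
Proof. by rewrite /tangent big_cat. Qed.

Lemma tangent_mul L1 L2 :
  tangent (mul_terms L1 L2) = tangent L1 * expp L2 0%N + expp L1 0%N * tangent L2.
Proof.
rewrite /tangent big_allpairs_dep !expp_at0 !big_distrl -big_split.
apply: eq_bigr => t _; rewrite !big_distrr -big_split; apply: eq_bigr => u _ /=.
by rewrite addn_eq0 -mulnb natrM; ring.
Qed.

Lemma Co_expp L : Co (expp L).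
Proof.
apply/CoP; exists (\prod_(t <- L) ('X - t.1.2%:P) ^+ t.2.+1).
  by apply/monic_neq0/monic_prod => t _; apply/monic_exp/monicXsubC.
rewrite act_sum; apply: functional_extensionality => n; rewrite big_seq big1 // => t Lt.
by rewrite (big_rem t Lt) /= [X in act X]mulrC act_mul act_expm_root act_dzero mulr0.
Qed.

Lemma act_XsubC_onto_expm z a m : exists L, act ('X - z%:P) (expp L) = expm a m.
Proof.
have [<-|az] := eqVneq a z.
  exists [:: (m.+1%:R^-1, a, m.+1)]; rewrite act_XsubC; apply: functional_extensionality => n.
  rewrite !expp_cons /expp !big_nil expmS /=.
  by field; rewrite addrC natr1 pnatr_eq0.
have az0 : a - z != 0 by rewrite subr_eq0.
elim: m => [|m [L0 L0E]].
  exists [:: ((a - z)^-1, a, 0%N)]; rewrite act_XsubC; apply: functional_extensionality => n.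
  by rewrite !expp_cons /expp !big_nil expmS /=; field.
exists (((a - z)^-1, a, m.+1) :: scale_terms (- m.+1%:R / (a - z)) L0).
rewrite act_XsubC; rewrite act_XsubC in L0E; apply: functional_extensionality => n.
have /= L0n := congr1 (fun g => g n) L0E.
rewrite !expp_cons !expp_scale expmS /= -L0n.
by field.
Qed.

Lemma act_XsubC_onto z L : exists L', act ('X - z%:P) (expp L') = expp L.
Proof.
elim: L => [|t L [L' L'E]].
  exists [::]; rewrite expp_nil act_XsubC.
  by apply: functional_extensionality => n; rewrite /dzero mulr0 subr0.
have [Lt LtE] := act_XsubC_onto_expm z t.1.2 t.2.
exists (scale_terms t.1.1 Lt ++ L'); move: LtE L'E; rewrite !act_XsubC => LtE L'E.
apply: functional_extensionality => n.
have /= Ltn := congr1 (fun g => g n) LtE; have /= L'n := congr1 (fun g => g n) L'E.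
by rewrite expp_cons !expp_cat !expp_scale -Ltn -L'n; ring.
Qed.

Lemma expp_of_act_prod_XsubC (r : seq CC) f :
  act (\prod_(z <- r) ('X - z%:P)) f = dzero -> exists L, f = expp L.
Proof.
elim: r f => [|z r IHr] f.
  by rewrite big_nil act1 => ->; exists [::]; rewrite expp_nil.
rewrite big_cons mulrC act_mul => /IHr [L1 L1E].
have [L2 L2E] := act_XsubC_onto z L1.
pose h n := f n - expp L2 n.
have /act_XsubC_eq0 hE : act ('X - z%:P) h = dzero.
  move: L1E L2E; rewrite !act_XsubC => L1E L2E.
  apply: functional_extensionality => n; have /= L1n := congr1 (fun g => g n) L1E.
  have /= L2n := congr1 (fun g => g n) L2E.
  rewrite /h /dzero; transitivity ((f n.+1 - z * f n) - (expp L2 n.+1 - z * expp L2 n)).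
    by ring.
  by rewrite L1n L2n subrr.
exists (rcons L2 (h 0%N, z, 0%N)); apply: functional_extensionality => n.
rewrite -cats1 expp_cat expp_cons expp_nil expm_pow /dzero addr0 -(congr1 (fun g => g n) hE) /h.
by ring.
Qed.

Lemma expp_of_Co f : Co f -> exists L, f = expp L.
Proof.
move=> /CoP [p p0 pf]; have [r pE] := closed_field_poly_normal p.
apply: (@expp_of_act_prod_XsubC r); move: pf; rewrite pE -[_ *: _]addr0 act_lin.
move=> /(congr1 (fun g => g _)) /= pfn; apply: functional_extensionality => n.
move: (pfn n); rewrite /act mulr0 dual_eval0 addr0 /dzero => /eqP.
by rewrite mulf_eq0 lead_coef_eq0 (negbTE p0) => /eqP.
Qed.

Lemma Co_dadd f g : Co f -> Co g -> Co (dadd f g).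
Proof.
move=> /expp_of_Co [Lf ->] /expp_of_Co [Lg ->].
have -> : dadd (expp Lf) (expp Lg) = expp (Lf ++ Lg).
  by apply: functional_extensionality => n; rewrite expp_cat.
exact: Co_expp.
Qed.

Lemma Co_conv f g : Co f -> Co g -> Co (conv f g).
Proof. by move=> /expp_of_Co [Lf ->] /expp_of_Co [Lg ->]; rewrite -expp_mul; apply: Co_expp. Qed.

Lemma coprimep_prod_XsubC_exp M b (s : seq CC) : b \notin s ->
  coprimep (\prod_(a <- s) ('X - a%:P) ^+ M) (('X - b%:P) ^+ M).
Proof.
elim: s => [|a s IHs]; first by rewrite big_nil coprime1p.
rewrite in_cons negb_or => /andP [ba bs].
rewrite big_cons coprimepMl IHs // andbT.
by apply/coprimep_expl/coprimep_expr/coprimep_XsubC2; rewrite subr_eq0.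
Qed.

Lemma chinese_XsubC_exp M (s : seq CC) : uniq s ->
  exists T : {poly CC}, forall a, a \in s -> ('X - a%:P) ^+ M %| T - a%:P.
Proof.
elim: s => [|b s IHs] /=; first by exists 0.
move=> /andP [bs /IHs [T' T'E]].
pose U := \prod_(a <- s) ('X - a%:P) ^+ M.
have /Bezout_eq1_coprimepP [[u1 u2] /= uE] := coprimep_prod_XsubC_exp M bs.
exists (T' + u1 * U * (b%:P - T')) => a; rewrite in_cons => /orP [/eqP ->|sa].
  have -> : T' + u1 * U * (b%:P - T') - b%:P = - (u2 * (b%:P - T')) * ('X - b%:P) ^+ M.
    have -> : u1 * U = 1 - u2 * ('X - b%:P) ^+ M by rewrite -uE addrK.
    by ring.
  exact: dvdp_mull.
have -> : T' + u1 * U * (b%:P - T') - a%:P = (T' - a%:P) + u1 * U * (b%:P - T') by ring.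
by rewrite dvdp_add ?T'E // dvdp_mulr // dvdp_mull // /U (big_rem a sa) dvdp_mulr.
Qed.

Lemma dual_eval_expm_semisimple a m (T : {poly CC}) :
  ('X - a%:P) ^+ m.+1 %| T - a%:P -> dual_eval (expm a m) T = (m == 0)%:R * a.
Proof.
move=> /dvdpP [Q TE]; have -> : T = a%:P + Q * ('X - a%:P) ^+ m.+1 by rewrite -TE addrC subrK.
by rewrite dual_evalD dual_evalC dual_eval_mul act_expm_root dual_eval_dzero addr0 expm_at0 mulrC.
Qed.

(* T is the semisimple part of X on the generalized eigenspaces of the terms of L. *)
Lemma dual_eval_expp_semisimple L (T : {poly CC}) :
  (forall t, t \in L -> ('X - t.1.2%:P) ^+ t.2.+1 %| T - t.1.2%:P) ->
  dual_eval (expp L) T = tangent L.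
Proof.
move=> TL; rewrite dual_eval_sum /tangent big_seq [RHS]big_seq.
by apply: eq_bigr => t Lt; rewrite dual_eval_expm_semisimple ?TL //; ring.
Qed.

Lemma tangent_expp L L' : expp L = expp L' -> tangent L = tangent L'.
Proof.
move=> LL'; pose M := (\sum_(t <- L ++ L') t.2.+1)%N.
have [T TE] := chinese_XsubC_exp M (undup_uniq [seq t.1.2 | t <- L ++ L']).
have semisimple K : {subset K <= L ++ L'} -> dual_eval (expp K) T = tangent K.
  move=> KL; apply: dual_eval_expp_semisimple => t /KL tLL'.
  apply: dvdp_trans (TE _ _); last by rewrite mem_undup; apply: map_f.
  by rewrite dvdp_exp2l // /M (big_rem t tLL') leq_addr.
by rewrite -!semisimple -?LL' // => t tL; rewrite mem_cat tL ?orbT.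
Qed.

Lemma conv_xi g n : conv g xi n = n%:R * g n.-1.
Proof.
case: n => [|n]; first by rewrite conv_at0 /xi mulr0 mul0r.
rewrite /conv big_ord_recr /= subnn /xi /= mulr0 addr0.
rewrite big_ord_recr /= subSnn /= mulr1 binSn big1 ?add0r // => i _.
rewrite (_ : (n.+1 - i == 1)%N = false) ?mulr0 //.
by apply/negbTE; have := ltn_ord i; lia.
Qed.

Definition divX (f : dual) : dual := fun j => f j.+1 / j.+1%:R.

Lemma conv_divX_xi f : f 0%N = 0 -> conv (divX f) xi = f.
Proof.
move=> f0; apply: functional_extensionality => -[|n]; rewrite conv_xi ?mul0r //.
by rewrite /divX mulrC -mulrA mulVf ?mulr1 // pnatr_eq0.
Qed.

Lemma xi_in_J : Jid xi.
Proof. by split; [|apply: (@Co_finsupp 2) => -[|[|k]]]. Qed.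

Lemma IpowP n f : Ipow n f <-> forall k, (k < n)%N -> f k = 0.
Proof.
split.
  elim=> {n f} [f _|n|n f g _ IHf _ IHg|n f g _ IHf g0] k //.
    by move=> kn; rewrite /dadd IHf // IHg // addr0.
  move=> kn; rewrite /conv big1 // => i _; have := leq_ord i; rewrite leq_eqVlt.
  case/orP => [/eqP ->|ik]; first by rewrite subnn g0 mulr0.
  by rewrite IHf ?mulr0 ?mul0r // (leq_trans ik).
elim: n f => [|n IHn] f fn; first exact: idpow_ring.
rewrite -(conv_divX_xi (fn 0%N isT)); apply: (idpow_mul _ xi_in_J.1).
by apply: IHn => k kn; rewrite /divX fn ?mul0r.
Qed.

Lemma Jpow_finsupp n N f :
  (forall k, (N <= k)%N -> f k = 0) -> (forall k, (k < n)%N -> f k = 0) -> Jpow n f.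
Proof.
elim: n f => [|n IHn] f fN fn; first by apply/idpow_ring/(Co_finsupp fN).
rewrite -(conv_divX_xi (fn 0%N isT)); apply: (idpow_mul _ xi_in_J).
by apply: IHn => k kn; rewrite /divX; [rewrite fN ?mul0r // leqW | rewrite fn ?mul0r].
Qed.

Lemma Jpow_Co_Ipow n f : Jpow n f -> Co f /\ Ipow n f.
Proof.
elim=> {n f} [f Cf|n|n f g _ [Cf If] _ [Cg Ig]|n f g _ [Cf If] [g0 Cg]].
- by split=> //; apply: idpow_ring.
- by split; [apply: (@Co_finsupp 0) | apply: idpow_zero].
- by split; [apply: Co_dadd | apply: idpow_add].
- by split; [apply: Co_conv | apply: idpow_mul].
Qed.

Lemma tangent_Jpow n f L : Jpow n f -> (1 < n)%N -> f = expp L -> tangent L = 0.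
Proof.
move=> Jf; elim: Jf L => {n f} [f _|n|n f g Jf IHf Jg IHg|n f g Jf _ [g0 Cg]] L // n1 fL.
- by rewrite (@tangent_expp L [::]) -?fL ?expp_nil // /tangent big_nil.
- have [Lf fE] := expp_of_Co (Jpow_Co_Ipow Jf).1.
  have [Lg gE] := expp_of_Co (Jpow_Co_Ipow Jg).1.
  rewrite (@tangent_expp L (Lf ++ Lg)); last first.
    by rewrite -fL fE gE; apply: functional_extensionality => k; rewrite expp_cat.
  by rewrite tangent_cat (IHf Lf n1 fE) (IHg Lg n1 gE) addr0.
- have f0 : f 0%N = 0 by apply: (IpowP n f).1 (Jpow_Co_Ipow Jf).2 0%N n1.
  have [Lf fE] := expp_of_Co (Jpow_Co_Ipow Jf).1.
  have [Lg gE] := expp_of_Co Cg.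
  rewrite (@tangent_expp L (mul_terms Lf Lg)); last by rewrite -fL expp_mul fE gE.
  by rewrite tangent_mul -fE -gE f0 g0 mulr0 mul0r addr0.
Qed.

Lemma cpow_xi k n : cpow xi k n = expm 0 k n.
Proof.
rewrite expm_zero_base; elim: k n => [|k IHk] n; first by rewrite /= /eps fact0 mulr1.
rewrite /= conv_xi IHk; case: n => [|n] /=; first by rewrite !mul0r.
by rewrite eqSS factS natrM; case: eqP => [->|_] /=; ring.
Qed.

Lemma kerelE m n : kerel m n = 1 - (n < m)%:R.
Proof.
rewrite /kerel /dsub /phi1; congr (_ - _).
transitivity (\sum_(k < m | k == n :> nat) 1 : CC).
  rewrite [RHS]big_mkcond; apply: eq_bigr => k _; rewrite cpow_xi expm_zero_base eq_sym.
  by case: eqP => _; rewrite ?mul0r ?mulr0 // mul1r mulVf // pnatr_eq0 -lt0n fact_gt0.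
by rewrite (big_ord1_eq _ (fun=> 1)); case: ltnP.
Qed.

Definition kerel_terms m : seq term :=
  (1, 1, 0%N) :: [seq (- (k`!%:R)^-1, 0, k) | k <- iota 0 m].

Lemma kerel_expp m : kerel m = expp (kerel_terms m).
Proof.
apply: functional_extensionality => n.
rewrite /kerel /dsub /phi1 expp_cons /= expm_pow expr1n mulr1 /expp big_map.
rewrite [iota 0 m](_ : _ = index_iota 0 m); last by rewrite /index_iota subn0.
rewrite big_mkord -sumrN.
by congr (_ + _); apply: eq_bigr => k _; rewrite cpow_xi mulNr.
Qed.

Lemma tangent_kerel_terms m : tangent (kerel_terms m) = 1.
Proof. by rewrite /tangent big_cons big_map big1 => [|k _]; rewrite ?addr0 ?mulr1 ?mulr0. Qed.

Lemma Co_kerel m : Co (kerel m).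
Proof. by rewrite kerel_expp; apply: Co_expp. Qed.

Lemma Ipow_kerel m : Ipow m (kerel m).
Proof. by apply/IpowP => k km; rewrite kerelE km subrr. Qed.

Lemma kerel_notin_Jpow2 m : ~ Jpow 2 (kerel m).
Proof.
move=> /tangent_Jpow /(_ isT (kerel_expp m)).
by rewrite tangent_kerel_terms => /eqP; rewrite oner_eq0.
Qed.

Lemma limJ_kerel : limJ kerel.
Proof.
split=> [n|n]; first exact: Co_kerel.
apply: (@Jpow_finsupp n n.+1) => k kn; rewrite /dsub !kerelE.
  by rewrite ltnS leqNgt kn ltnNge (ltnW kn) subrr.
by rewrite kn ltnS (ltnW kn) subrr.
Qed.

Lemma iota_hat_kerel : eqI (iota_hat kerel) szero.
Proof.
by move=> n; apply/IpowP => k kn; rewrite /iota_hat /dsub /szero /dzero kerelE kn !subrr.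
Qed.

Lemma kerel_neq0 : ~ eqJ kerel szero.
Proof.
move=> /(_ 2%N); have -> : dsub (kerel 2) (szero 2) = kerel 2.
  by apply: functional_extensionality => k; rewrite /dsub /szero /dzero subr0.
exact: kerel_notin_Jpow2.
Qed.

Definition trunc (b : nat -> dual) : nat -> dual :=
  fun n k => if (k < n)%N then b n k else 0.

Lemma trunc_ge b n k : (n <= k)%N -> trunc b n k = 0.
Proof. by rewrite /trunc ltnNge => ->. Qed.

Lemma trunc_lt b n k : (k < n)%N -> trunc b n k = b n k.
Proof. by rewrite /trunc => ->. Qed.

Lemma trunc_limJ b : limI b -> limJ (trunc b).
Proof.
move=> Ib; split=> n; first by apply: (@Co_finsupp n) => k /trunc_ge.
apply: (@Jpow_finsupp n n.+1) => k kn; rewrite /dsub.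
  by rewrite !trunc_ge ?subrr // ltnW.
by rewrite !trunc_lt //; [apply: (IpowP _ _).1 (Ib n) _ kn | apply: ltnW].
Qed.

Lemma trunc_eqJ b b' : eqI b b' -> eqJ (trunc b) (trunc b').
Proof.
move=> bb' n; apply: (@Jpow_finsupp n n) => k kn; rewrite /dsub.
  by rewrite !trunc_ge ?subrr.
by rewrite !trunc_lt //; apply: (IpowP _ _).1 (bb' n) _ kn.
Qed.

Lemma iota_hat_trunc b : eqI (iota_hat (trunc b)) b.
Proof. by move=> n; apply/IpowP => k kn; rewrite /iota_hat /dsub trunc_lt ?subrr. Qed.

Lemma truncD b b' : eqJ (trunc (sadd b b')) (sadd (trunc b) (trunc b')).
Proof.
move=> n; apply: (@Jpow_finsupp n n) => k kn; rewrite /dsub /sadd /dadd.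
  by rewrite !trunc_ge ?addr0 ?subrr.
by rewrite !trunc_lt ?subrr.
Qed.

Lemma truncM b b' : eqJ (trunc (smul b b')) (smul (trunc b) (trunc b')).
Proof.
move=> n; apply: (@Jpow_finsupp n (n + n)) => k kn; rewrite /dsub /smul.
  have nk : (n <= k)%N := leq_trans (leq_addr n n) kn.
  by rewrite trunc_ge // (@conv_finsupp n) ?subrr // => j; apply: trunc_ge.
rewrite trunc_lt // (@conv_local _ (b n) _ (b' n)) ?subrr // => j jk.
by rewrite !trunc_lt // (leq_ltn_trans jk kn).
Qed.

Lemma truncZ c b : eqJ (trunc (sscale c b)) (sscale c (trunc b)).
Proof.
move=> n; apply: (@Jpow_finsupp n n) => k kn; rewrite /dsub /sscale /dscale.
  by rewrite !trunc_ge ?mulr0 ?subrr.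
by rewrite !trunc_lt ?subrr.
Qed.

Lemma trunc1 : eqJ (trunc sone) sone.
Proof.
move=> n; apply: (@Jpow_finsupp n n.+1) => k kn; rewrite /dsub.
  by rewrite trunc_ge ?(ltnW kn) // /sone /eps; case: k kn => [|k] //= _; rewrite subrr.
by rewrite trunc_lt ?subrr.
Qed.

Theorem mainTheorem5 :
  (* iota-hat is a split surjection: an algebra section s of iota-hat *)
  (exists s : (nat -> dual) -> (nat -> dual),
      (forall b, limI b -> limJ (s b)) /\
      (forall b b', limI b -> limI b' -> eqI b b' -> eqJ (s b) (s b')) /\
      (forall b, limI b -> eqI (iota_hat (s b)) b) /\
      (forall b b', limI b -> limI b' -> eqJ (s (sadd b b')) (sadd (s b) (s b'))) /\
      (forall b b', limI b -> limI b' -> eqJ (s (smul b b')) (smul (s b) (s b'))) /\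
      (forall c b, limI b -> eqJ (s (sscale c b)) (sscale c (s b))) /\
      eqJ (s sone) sone) /\
  (* iota-hat is not injective *)
  (exists a, limJ a /\ eqI (iota_hat a) szero /\ ~ eqJ a szero) /\
  (* the J-adic topology on C^o is finer than the one induced from the I-adic one *)
  (forall n f, Jpow n f -> Co f /\ Ipow n f) /\
  (* ... and not equivalent to it *)
  (exists n, forall m, ~ (forall f, Co f -> Ipow m f -> Jpow n f)) /\
  (* the explicit element is a non-zero element of the kernel of iota-hat *)
  (limJ kerel /\ eqI (iota_hat kerel) szero /\ ~ eqJ kerel szero).
Proof.
have kerel_in_ker : limJ kerel /\ eqI (iota_hat kerel) szero /\ ~ eqJ kerel szero.
  by split; [exact: limJ_kerel | split; [exact: iota_hat_kerel | exact: kerel_neq0]].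
split.
  exists trunc; split; first exact: trunc_limJ.
  split; first by move=> b b' _ _; apply: trunc_eqJ.
  split; first by move=> b _; apply: iota_hat_trunc.
  split; first by move=> b b' _ _; apply: truncD.
  split; first by move=> b b' _ _; apply: truncM.
  by split; [move=> c b _; apply: truncZ | apply: trunc1].
split; first by exists kerel.
split; first by move=> n f /Jpow_Co_Ipow.
split=> //; exists 2%N => m J2_of_Im.
by apply: (@kerel_notin_Jpow2 m); apply: J2_of_Im; [apply: Co_kerel | apply: Ipow_kerel].
Qed.
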